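(* If a Boolean function $f:\{0,1\}^n\to\{0,1\}$ has a nearest neighbor representation with $m$ prototypes, then it has a sign-representation over $\{1,2\}$ having $m$ terms (monomials).
   Context: A nearest neighbor representation of $f$ is a pair of disjoint sets $(P,N)$ of points of $\mathbb R^n$ (prototypes; their number is $|P\cup N|$) such that for every $a\in\{0,1\}^n$: if $f(a)=1$, there is $b\in P$ with $d(a,b)<d(a,c)$ for all $c\in N$; if $f(a)=0$, there is $b\in N$ with $d(a,b)<d(a,c)$ for all $c\in P$ ($d$ = Euclidean distance). Write $\tilde x_i=2^{x_i}$, a bijection $\{0,1\}\to\{1,2\}$. A multivariate polynomial $p(\tilde x_1,\dots,\tilde x_n)$ (with real coefficients and nonnegative integer exponents) is a sign-representation of $f$ over $\{1,2\}$ if for every $x\in\{0,1\}^n$, $p(2^{x_1},\dots,2^{x_n})\ge 0$ iff $f(x)=1$. The number of terms is the number of monomials of $p$. *)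

From HB Require Import structures.
From mathcomp Require Import all_boot all_order all_algebra.
From mathcomp Require Import finmap.
From mathcomp Require Import mpoly.
From mathcomp Require Import reals.
Set Implicit Arguments. Unset Strict Implicit. Unset Printing Implicit Defensive.
Import Order.TTheory GRing.Theory Num.Theory.
Local Open Scope ring_scope.
Local Open Scope fset_scope.

Section Defs.
Variables (R : realType) (n : nat).

Definition bpt (a : 'I_n -> bool) : 'rV[R]_n := \row_i (a i)%:R.

Definition edist (u v : 'rV[R]_n) : R := Num.sqrt (\sum_i (u 0 i - v 0 i) ^+ 2).

Definition nn_rep (f : ('I_n -> bool) -> bool) (P N : {fset 'rV[R]_n}) : Prop :=
  P `&` N = fset0 /\
  forall a : 'I_n -> bool,
    (f a -> exists2 b, b \in P & forall c, c \in N -> edist (bpt a) b < edist (bpt a) c) /\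
    (~~ f a -> exists2 b, b \in N & forall c, c \in P -> edist (bpt a) b < edist (bpt a) c).

Definition nprototypes (P N : {fset 'rV[R]_n}) : nat := #|` P `|` N|.

Definition tilde (a : 'I_n -> bool) : 'I_n -> R := fun i => if a i then 2 else 1.

Definition sign_rep (f : ('I_n -> bool) -> bool) (p : {mpoly R[n]}) : Prop :=
  forall a : 'I_n -> bool, (0 <= p.@[tilde a]) <-> f a.

Definition nterms (p : {mpoly R[n]}) : nat := size (msupp p).

End Defs.

From HB Require Import structures.
From mathcomp Require Import all_boot all_order all_algebra.
From mathcomp Require Import finmap mpoly reals.
From mathcomp Require Import zify lra.
Set Implicit Arguments. Unset Strict Implicit. Unset Printing Implicit Defensive.
Import Order.TTheory GRing.Theory Num.Theory.
Local Open Scope ring_scope.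

(* The squared distance from a vertex a of the cube to a prototype b is
   separable, |a - b|^2 = sum_i (a_i - b_i)^2.  Scaling by a large M and rounding
   every summand down turns it, up to an error of at most n, into an integer
   affine function of a, so 2^(const - M |a - b|^2) is approximately the value
   of a monomial with natural exponents at x~ = 2^a.  Add these monomials with
   sign + for the prototypes of P and - for those of N.  Once M exceeds 2n over
   the least positive gap between squared distances, the term of the nearest
   prototype is at least 2^m times each term of the other class, so it fixes
   the sign of the sum. *)

Lemma exists_pos_lower_bound (R : realDomainType) (T : finType) (g : T -> R) :
  exists2 d : R, 0 < d & forall t, 0 < g t -> d <= g t.
Proof.
exists (\big[Order.min/1]_(t | 0 < g t) g t).
  by apply/bigmin_gtP; split=> [|t]; rewrite ?ltr01.
by move=> t; apply: bigmin_le_cond.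
Qed.

Lemma signed_sum_dominant (R : realDomainType) (I : finType) (s : I -> bool)
    (x : I -> R) (y : R) (i0 : I) :
  (forall i, 0 <= x i) -> 0 <= y -> (forall i, s i != s i0 -> x i <= y) ->
  #|I|%:R * y < x i0 -> 0 < (-1) ^+ (~~ s i0) * \sum_i (-1) ^+ (~~ s i) * x i.
Proof.
move=> x_ge0 y_ge0 x_le_y x_i0_gt.
have -> : (-1) ^+ (~~ s i0) * \sum_i (-1) ^+ (~~ s i) * x i =
    \sum_(i | s i == s i0) x i - \sum_(i | s i != s i0) x i.
  rewrite mulr_sumr (bigID (fun i => s i == s i0)) /= -sumrN.
  by congr (_ + _); apply: eq_bigr => i; rewrite mulrA -signr_addb;
    case: (s i) (s i0) => -[]; rewrite ?mul1r ?mulN1r.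
have same_ge : x i0 <= \sum_(i | s i == s i0) x i.
  by rewrite (bigD1 i0) //= lerDl sumr_ge0.
have other_le : \sum_(i | s i != s i0) x i <= #|I|%:R * y.
  apply: (@le_trans _ _ (\sum_(i | s i != s i0) y)); first exact: ler_sum.
  by rewrite sumr_const -[y *+ _]mulr_natl ler_wpM2r // ler_nat max_card.
lra.
Qed.

Definition mdeg_in n (a : 'I_n -> bool) (k : 'X_{1..n}) : nat := (\sum_i a i * k i)%N.

Lemma meval_tilde_mpolyX (R : realType) n (a : 'I_n -> bool) (k : 'X_{1..n}) :
  'X_[k].@[tilde R a] = 2 ^+ mdeg_in a k.
Proof.
rewrite mevalX /mdeg_in -prodrXr; apply: eq_bigr => i _.
by rewrite /tilde exprM; case: (a i); rewrite ?expr1 ?expr0 ?expr1n.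
Qed.

Lemma nterms_sum_monomials (R : realType) n (I : finType) (c : I -> R)
    (k : I -> 'X_{1..n}) :
  injective k -> (forall i, c i != 0) -> nterms (\sum_i c i *: 'X_[k i]) = #|I|.
Proof.
move=> k_inj c_neq0; rewrite /nterms.
rewrite (perm_size (msupp_sum xpredT (index_enum_uniq I) _)); last first.
  move=> i j _ _ ij m /=; rewrite !msuppMCX // !inE.
  by apply/negP => /andP[/eqP-> /eqP/k_inj/eqP]; rewrite (negbTE ij).
rewrite filter_predT.
have -> : flatten [seq msupp (c i *: 'X_[k i]) | i <- index_enum I] =
    [seq k i | i <- index_enum I].
  by elim: (index_enum I) => //= i r ->; rewrite msuppMCX.
by rewrite size_map cardT enumT.
Qed.

Section SeparableCost.
Variables (R : archiRealFieldType) (n : nat) (I : finType) (c : I -> 'I_n -> bool -> R).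
Hypothesis c_ge0 : forall j i t, 0 <= c j i t.

Let C (a : 'I_n -> bool) j := \sum_i c j i (a i).

Lemma truncn_sum_bounds (M : R) (a : 'I_n -> bool) j : 0 <= M ->
  ((\sum_i Num.truncn (M * c j i (a i)))%:R <= M * C a j) /\
  (M * C a j <= (\sum_i Num.truncn (M * c j i (a i)) + n)%:R).
Proof.
move=> M_ge0; rewrite /C mulr_sumr natr_sum; split.
  by apply: ler_sum => i _; rewrite truncn_le mulr_ge0.
rewrite -[n in (_ + n)%N]card_ord -sum1_card -big_split /= natr_sum.
by apply: ler_sum => i _; rewrite addn1 ltW // truncnS_gt.
Qed.

Lemma nat_separable_cost_gap : exists e : I -> 'I_n -> bool -> nat,
  forall (a : 'I_n -> bool) j j0, C a j0 < C a j ->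
    (\sum_i e j0 i (a i) + n < \sum_i e j i (a i))%N.
Proof.
have [d d_gt0 d_le] := exists_pos_lower_bound
  (fun t : {ffun 'I_n -> bool} * I * I => C t.1.1 t.2 - C t.1.1 t.1.2).
pose M : R := (Num.truncn ((2 * n)%:R / d)).+1%:R.
have Md : (2 * n)%:R < M * d by rewrite -ltr_pdivrMr // truncnS_gt.
exists (fun j i t => Num.truncn (M * c j i t)) => a j j0 lt_j0j.
have gap : M * d <= M * C a j - M * C a j0.
  have C_ffun k : C (finfun a) k = C a k by apply: eq_bigr => i _; rewrite ffunE.
  have := d_le (finfun a, j0, j); rewrite /= !C_ffun -mulrBr subr_gt0.
  by move=> /(_ lt_j0j); apply: ler_wpM2l.
have [lo0 up0] := truncn_sum_bounds (M := M) a j0 (ler0n _ _).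
have [lo up] := truncn_sum_bounds (M := M) a j (ler0n _ _).
rewrite -(ltr_nat R) natrD; rewrite natrD in up up0; rewrite natrM in Md; lra.
Qed.

End SeparableCost.

Section DominatingMonomials.
Variables (n : nat) (I : finType) (e : I -> 'I_n -> bool -> nat).
Hypothesis n_gt0_or_card_le1 : (0 < n)%N || (#|I| <= 1)%N.

Let E (a : 'I_n -> bool) j := (\sum_i e j i (a i))%N.

Lemma exists_dominating_monomials :
  exists (g : I -> nat) (k : I -> 'X_{1..n}), injective k /\
    forall a j j0, (E a j0 + n < E a j)%N ->
      (g j + mdeg_in a (k j) + #|I| <= g j0 + mdeg_in a (k j0))%N.
Proof.
pose m := #|I|.
have [B e_le] : exists B, forall j i t, (e j i t <= B)%N.
  exists (\max_(x : I * 'I_n * bool) e x.1.1 x.1.2 x.2)%N => j i t.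
  exact: (@leq_bigmax _ (fun x : I * 'I_n * bool => e x.1.1 x.1.2 x.2) (j, i, t)).
(* All exponents of [k j] are congruent to [enum_rank j] modulo [m], which makes
   the [k j] pairwise distinct; the rounded costs are scaled by [m] so that this
   shift cannot close the gap. *)
pose k j := [multinom m * (B + e j i false - e j i true) + enum_rank j | i < n].
pose g j := (m * \sum_i (B - e j i false))%N.
exists g, k; split.
  move=> j j' kjj'; case/orP: n_gt0_or_card_le1 => [n_gt0 | card_le1].
    have := congr1 (fun x : 'X_{1..n} => (x (Ordinal n_gt0) %% m)%N) kjj'.
    rewrite /= !mnmE ![(m * _)%N]mulnC !modnMDl !modn_small //.
    by move/ord_inj/enum_rank_inj.
  by move/card_le1_eqP: card_le1; apply.
pose A (a : 'I_n -> bool) := (\sum_i (a i : nat))%N.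
pose S (a : 'I_n -> bool) := (\sum_i (m * B + a i * (m * B)))%N.
have balance a j : (g j + mdeg_in a (k j) + m * E a j = S a + A a * enum_rank j)%N.
  rewrite /g /mdeg_in /E /S /A !big_distrr big_distrl -!big_split; apply: eq_bigr => i _ /=.
  have le0 : (m * e j i false <= m * B)%N by rewrite leq_mul2l e_le orbT.
  have le1 : (m * e j i true <= m * B)%N by rewrite leq_mul2l e_le orbT.
  rewrite mnmE !(mulnBr, mulnDr); case: (a i) => /=; rewrite ?mul1n ?mul0n; lia.
move=> a j j0 gap; have := balance a j; have := balance a j0.
have : (A a * enum_rank j <= m * n)%N.
  rewrite mulnC; apply: leq_mul; first exact: ltnW.
  rewrite /A; apply: (@leq_trans (\sum_(i < n) 1)%N); last by rewrite sum1_card card_ord.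
  by apply: leq_sum => i _; apply: leq_b1.
have : (m * (E a j0 + n).+1 <= m * E a j)%N by rewrite leq_mul2l gap orbT.
rewrite mulnS mulnDr -/m.
move: (A a * _)%N (A a * _)%N => x y; lia.
Qed.
End DominatingMonomials.

Lemma sign_rep_dominating_monomials (R : realType) n (I : finType)
    (f : ('I_n -> bool) -> bool) (s : I -> bool) (g : I -> nat) (k : I -> 'X_{1..n}) :
  (forall a, exists2 j0, s j0 = f a & forall j, s j != s j0 ->
     (g j + mdeg_in a (k j) + #|I| <= g j0 + mdeg_in a (k j0))%N) ->
  sign_rep f (\sum_j ((-1) ^+ (~~ s j) * 2 ^+ g j) *: 'X_[k j] : {mpoly R[n]}).
Proof.
move=> dom a; have [j0 <- dom_j0] := dom a.
set p := (\sum_j _ : {mpoly R[n]}).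
pose x j : R := 2 ^+ (g j + mdeg_in a (k j)).
have x_gt0 j : 0 < x j by rewrite exprn_gt0.
have p_a : p.@[tilde R a] = \sum_j (-1) ^+ (~~ s j) * x j.
  rewrite raddf_sum; apply: eq_bigr => j _ /=.
  by rewrite mevalZ meval_tilde_mpolyX /x exprD mulrA.
have : 0 < (-1) ^+ (~~ s j0) * p.@[tilde R a].
  rewrite p_a; apply: (signed_sum_dominant (y := x j0 / 2 ^+ #|I|)) => [j|||].
  - exact: ltW.
  - by rewrite divr_ge0 ?exprn_ge0 ?ltW.
  - move=> j /dom_j0 le_j; rewrite ler_pdivlMr ?exprn_gt0 // -exprD.
    by rewrite ler_eXn2l ?ltr1n.
  - rewrite mulrA ltr_pdivrMr ?exprn_gt0 // mulrC ltr_pM2l //.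
    by rewrite -natrX ltr_nat ltn_expl.
by case: (s j0) => /=; rewrite ?mul1r ?mulN1r ?oppr_gt0 => p_sgn;
  split=> // [p_ge0]; [exact: ltW | by move: p_sgn; rewrite ltNge p_ge0].
Qed.

Lemma edist_bpt_lt (R : realType) n (a : 'I_n -> bool) (u v : 'rV[R]_n) :
  edist (bpt R a) u < edist (bpt R a) v ->
  \sum_i ((a i)%:R - u 0 i) ^+ 2 < \sum_i ((a i)%:R - v 0 i) ^+ 2.
Proof.
rewrite /edist /bpt; under eq_bigr do rewrite mxE; under [in X in _ < X]eq_bigr do rewrite mxE.
move=> lt_uv; rewrite -ltr_sqrt //.
by rewrite -sqrtr_gt0 (le_lt_trans (sqrtr_ge0 _) lt_uv).
Qed.

Lemma nn_rep_nearest (R : realType) n (f : ('I_n -> bool) -> bool) (P N : {fset 'rV[R]_n}) :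
  nn_rep f P N -> forall a, exists2 j0 : (P `|` N)%fset, (val j0 \in P) = f a &
    forall j : (P `|` N)%fset, (val j \in P) != (val j0 \in P) ->
      edist (bpt R a) (val j0) < edist (bpt R a) (val j).
Proof.
move=> [/eqP /fdisjointP disj nn] a.
have inU (j : (P `|` N)%fset) : val j \in P \/ val j \in N by apply/fsetUP; exact: fsvalP.
have [nnP nnN] := nn a.
case fa: (f a).
  have [b bP b_near] := nnP fa.
  have bU : b \in (P `|` N)%fset by rewrite in_fsetU bP.
  exists [` bU]%fset => //= j; rewrite bP; case: (inU j) => [-> // | jN _].
  exact: b_near.
have [b bN b_near] := nnN (negbT fa).
have bU : b \in (P `|` N)%fset by rewrite in_fsetU bN orbT.
have bP : b \notin P := contraL (@disj b) bN.
exists [` bU]%fset => /=; first exact: negbTE.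
by move=> j; rewrite (negbTE bP) eqbF_neg negbK; apply: b_near.
Qed.

Lemma dim_gt0_or_card_le1 (R : nmodType) n (U : {fset 'rV[R]_n}) :
  (0 < n)%N || (#|{: U}| <= 1)%N.
Proof.
case: n U => [|n] U //=; apply/card_le1_eqP => x y _ _.
by apply: val_inj; rewrite [val x]thinmx0 [val y]thinmx0.
Qed.

Theorem lemma7 (R : realType) (n m : nat) (f : ('I_n -> bool) -> bool) :
  (exists P N : {fset 'rV[R]_n}, nn_rep f P N /\ nprototypes P N = m) ->
  exists p : {mpoly R[n]}, sign_rep f p /\ nterms p = m.
Proof.
move=> [P [N [rep <-]]].
have [e e_gap] := nat_separable_cost_gap
  (fun (j : (P `|` N)%fset) (i : 'I_n) (t : bool) => sqr_ge0 (t%:R - val j 0 i : R)).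
have [g [k [k_inj dom]]] := exists_dominating_monomials e (dim_gt0_or_card_le1 (P `|` N)%fset).
exists (\sum_j ((-1) ^+ (~~ (val j \in P)) * 2 ^+ g j) *: 'X_[k j]); split.
  apply: sign_rep_dominating_monomials => a.
  have [j0 j0_fa j0_near] := nn_rep_nearest rep a.
  by exists j0 => // j /j0_near /edist_bpt_lt near; apply: dom; exact: e_gap near.
rewrite /nprototypes cardfE nterms_sum_monomials // => j.
by rewrite mulf_neq0 ?signr_eq0 ?expf_neq0 ?pnatr_eq0.
Qed.
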